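(* For $k\in\mathbb{N}$ and $s\in\mathbb{N}_0$ let \[ C_{s,k}:=\sum_{m=0}^{2s}(-1)^m\binom{2k+2s}{m}S(2k+2s-m,2k)\,k^m, \] where $S(n,m)$ denote the Stirling numbers of the second kind. Then for every $k\in\mathbb{N}$ and every $t$ with $|t|<1/k$, \[ \sum_{s=0}^{\infty}C_{s,k}\,t^{2s+2k}=\prod_{j=1}^{k}\frac{t^2}{1-j^2t^2}. \]
   Context: $S(n,m)$ is the Stirling number of the second kind (number of partitions of an $n$-element set into $m$ nonempty blocks), with $S(n,m)=0$ if $n<m$. *)

From HB Require Import structures.
From mathcomp Require Import all_boot all_order all_algebra.
From mathcomp Require Import all_classical all_reals all_analysis.
Set Implicit Arguments. Unset Strict Implicit. Unset Printing Implicit Defensive.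
Import Order.TTheory GRing.Theory Num.Theory.

(* Stirling number of the second kind S(n,m): the number of partitions of an
   n-element set (here 'I_n) into m nonempty blocks.  (Mathcomp's [partition]
   requires blocks to be nonempty, pairwise disjoint and to cover the set.)
   Automatically 0 when n < m. *)
Definition stirling2 (n m : nat) : nat :=
  #|[set P : {set {set 'I_n}} | finset.partition P [set: 'I_n] & #|P| == m]|.

Definition Csk (s k : nat) : int :=
  (\sum_(m < (2 * s).+1)
     (-1) ^+ m * ('C(2 * k + 2 * s, m) * stirling2 (2 * k + 2 * s - m) (2 * k) * k ^ m)%N%:Z)%R.

(* The numbers D_k(n, j) = sum_i (-1)^i binom(n, i) S(n - i, j) k^i are a binomial
   transform of the Stirling numbers, and C_{s,k} = D_k(2k + 2s, 2k).  The recurrence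
   S(n + 1, j) = S(n, j - 1) + j S(n, j) passes through the transform to
   D_k(n + 1, j) = D_k(n, j - 1) + (j - k) D_k(n, j), so the power series
   sum_n D_k(n, j) t^n is t^j / prod_{i = 0}^{j} (1 - (i - k) t); the bound
   |D_k(n, j)| <= binom(n, j) k^n makes it converge for |t| < 1/k.  For j = 2k the
   factors pair up into prod_{l = 1}^{k} (1 - l^2 t^2), an even function of t, so
   averaging the series at t and -t removes the odd coefficients and leaves
   sum_s C_{s,k} t^{2s + 2k}.  The Stirling recurrence itself comes from the usual
   bijection: a partition of D + {x} either has {x} as a block or is obtained by
   inserting x into a block of a partition of D. *)

From mathcomp Require Import all_boot all_order all_algebra.
From mathcomp Require Import all_classical all_reals all_analysis.
From mathcomp Require Import ring lra zify.
Import Order.TTheory GRing.Theory Num.Theory numFieldNormedType.Exports.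

Set Implicit Arguments. Unset Strict Implicit. Unset Printing Implicit Defensive.

Fixpoint stirling2_rec (n m : nat) : nat :=
  match n, m with
  | 0, 0 => 1
  | 0, _.+1 | _.+1, 0 => 0
  | n.+1, m.+1 => stirling2_rec n m + m.+1 * stirling2_rec n m.+1
  end.

Lemma stirling2_rec_small n m : n < m -> stirling2_rec n m = 0.
Proof. by elim: n m => [|n IHn] [|m] //= ltnm; rewrite !IHn ?muln0 // ltnW. Qed.

Lemma stirling2_recS m j :
  stirling2_rec m.+1 j = (if j is j'.+1 then stirling2_rec m j' else 0) + j * stirling2_rec m j.
Proof. by case: j. Qed.

Module SetPartitions.
(* Let [partition], [inE], [set0], [subsetP], ... denote the finset versions
   rather than the classical_sets ones. *)
Import mathcomp.boot.fintype mathcomp.boot.finset.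

Section AddPoint.
Variable T : finType.

Definition set_partitions (D : {set T}) m :=
  [set P : {set {set T}} | partition P D & #|P| == m].

Variables (x : T) (D : {set T}).
Hypothesis xD : x \notin D.

Definition pointed_partitions m :=
  [set QC : {set {set T}} * {set T} | (QC.1 \in set_partitions D m) && (QC.2 \in QC.1)].

Definition insert_in_block (QC : {set {set T}} * {set T}) :=
  (x |: QC.2) |: (QC.1 :\ QC.2).

Definition extract_from_block (P : {set {set T}}) :=
  ((pblock P x :\ x) |: (P :\ pblock P x), pblock P x :\ x).

Lemma notin_block Q B : partition Q D -> B \in Q -> x \notin B.
Proof. by move=> pQ BQ; apply: contra xD; apply: subsetP (partitionS pQ BQ) x. Qed.

Lemma set1_notin_partition Q : partition Q D -> [set x] \notin Q.
Proof. by move=> pQ; apply/negP => /(notin_block pQ); rewrite set11. Qed.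

Lemma setU1_block_notin Q C : partition Q D -> (x |: C) \notin Q :\ C.
Proof. by move=> pQ; rewrite inE negb_and (contraNN (notin_block pQ)) ?setU11 ?orbT. Qed.

Lemma set1U_set_partitions m Q :
  Q \in set_partitions D m -> [set x] |: Q \in set_partitions (x |: D) m.+1.
Proof.
rewrite !inE => /andP[pQ /eqP <-]; rewrite cardsU1 set1_notin_partition // eqxx andbT.
apply: partitionU1 => //; first by apply/set0Pn; exists x; rewrite set11.
by rewrite disjoints_subset; apply/subsetP => y; rewrite !inE => /eqP ->.
Qed.

Lemma setD1_set_partitions m P :
  P \in set_partitions (x |: D) m.+1 -> [set x] \in P -> P :\ [set x] \in set_partitions D m.
Proof.
rewrite !inE => /andP[pP /eqP cP] xP; have := partitionD1 pP xP.
rewrite setU1K // => -> /=; have := cardsD1 [set x] P.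
by rewrite xP cP => -[->].
Qed.

Lemma insert_in_block_partitions m QC :
  QC \in pointed_partitions m -> insert_in_block QC \in set_partitions (x |: D) m.
Proof.
case: QC => Q C; rewrite !inE /= => /andP[/andP[pQ /eqP cQ] CQ].
have CD := partitionS pQ CQ.
have -> : x |: D = (x |: C) :|: (D :\: C).
  apply/setP => y; rewrite !inE; case: (y =P x) => //= _.
  by case yC: (y \in C); rewrite ?andbT //= (subsetP CD).
rewrite /insert_in_block cardsU1 setU1_block_notin // -cQ (cardsD1 C Q) CQ eqxx andbT.
apply: partitionU1; [exact: partitionD1 | by apply/set0Pn; exists x; rewrite setU11 |].
rewrite disjoints_subset; apply/subsetP => y; rewrite !inE => /orP[/eqP->|->//].
by rewrite (negbTE (notin_block pQ CQ)).
Qed.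

Lemma insert_in_blockK m :
  {in pointed_partitions m, cancel insert_in_block extract_from_block}.
Proof.
move=> QC QCm; have := insert_in_block_partitions QCm.
case: QC QCm => Q C; rewrite !inE /= => /andP[/andP[pQ _] CQ] /andP[pP _].
have xCblock : pblock (insert_in_block (Q, C)) x = x |: C.
  by apply: def_pblock (partition_trivIset pP) _ _; rewrite setU11.
rewrite /extract_from_block xCblock /insert_in_block /=.
by rewrite !setU1K ?setD1K ?(notin_block pQ) ?setU1_block_notin.
Qed.

Section ExtractBlock.
Variable P : {set {set T}}.
Hypotheses (pP : partition P (x |: D)) (x1P : [set x] \notin P).

Let B := pblock P x.
Let BP : B \in P.
Proof. by rewrite pblock_mem // (cover_partition pP) setU11. Qed.
Let xB : x \in B.
Proof. by rewrite mem_pblock (cover_partition pP) setU11. Qed.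

Let Bx0 : B :\ x != set0.
Proof. by apply: contraNneq x1P => Bx0; rewrite -[[set x]]setU0 -Bx0 setD1K. Qed.

Let Bx_notin : B :\ x \notin P :\ B.
Proof.
have [y yBx] := set0Pn _ Bx0; have yB : y \in B by move: yBx; rewrite inE => /andP[].
rewrite inE negb_and; apply/orP; right; apply/negP => BxP.
have tP := partition_trivIset pP.
have : B :\ x = B by rewrite -(def_pblock tP BxP yBx) (def_pblock tP BP yB).
by move/setP/(_ x); rewrite setD11 xB.
Qed.

Lemma partition_extract_from_block : partition (extract_from_block P).1 D.
Proof.
have BD : B \subset x |: D := partitionS pP BP.
have -> : D = (B :\ x) :|: ((x |: D) :\: B).
  apply/setP => y; rewrite !inE; case: eqVneq => [->|yx] /=.
    by rewrite (negbTE xD) xB.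
  case yB: (y \in B) => //=; move: (subsetP BD y yB).
  by rewrite !inE (negbTE yx).
apply: partitionU1 => //; first exact: partitionD1.
by rewrite disjoints_subset; apply/subsetP => y; rewrite !inE => /andP[_ ->].
Qed.

Lemma extract_from_blockK : insert_in_block (extract_from_block P) = P.
Proof. by rewrite /insert_in_block /= setD1K // setU1K // setD1K. Qed.

Lemma extract_from_block_pointed m :
  #|P| = m -> extract_from_block P \in pointed_partitions m.
Proof.
move=> cP; rewrite !inE /= eqxx andbT partition_extract_from_block //= -/B.
by rewrite cardsU1 Bx_notin -cP (cardsD1 B P) BP.
Qed.

End ExtractBlock.

Lemma card_pointed_partitions m : #|pointed_partitions m| = m * #|set_partitions D m|.
Proof.
rewrite -sum1_card (eq_bigl (fun QC => (QC.1 \in set_partitions D m) && (QC.2 \in QC.1))).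
  rewrite -(pair_big_dep (mem (set_partitions D m)) (fun Q C => C \in Q) (fun _ _ => 1)) /=.
  rewrite (eq_bigr (fun _ => m)) ?sum_nat_const 1?mulnC // => Q.
  by rewrite inE sum1_card => /andP[_ /eqP].
by move=> QC; rewrite inE.
Qed.

Lemma set1_notin_insert_in_block m QC :
  QC \in pointed_partitions m -> [set x] \notin insert_in_block QC.
Proof.
case: QC => Q C; rewrite !inE /= => /andP[/andP[pQ _] CQ].
rewrite negb_or negb_and negbK (negbTE (set1_notin_partition pQ)) orbT andbT.
have [y yC] := set0Pn _ (partition_neq0 pQ CQ).
apply: contraNneq (notin_block pQ CQ) => /setP/(_ y).
by rewrite !inE yC orbT => /eqP <-.
Qed.

Lemma card_set_partitionsU1 m :
  #|set_partitions (x |: D) m.+1| = #|set_partitions D m| + m.+1 * #|set_partitions D m.+1|.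
Proof.
pose S1 := [set P : {set {set T}} | [set x] \in P].
rewrite -card_pointed_partitions -(cardsID S1).
have -> : set_partitions (x |: D) m.+1 :&: S1 = [set [set x] |: Q | Q in set_partitions D m].
  apply/setP => P; apply/setIP/imsetP => [[Pm] | [Q Qm ->]].
    by rewrite inE => xP; exists (P :\ [set x]); rewrite ?setD1_set_partitions ?setD1K.
  by rewrite set1U_set_partitions // inE setU11.
have -> : set_partitions (x |: D) m.+1 :\: S1 = insert_in_block @: pointed_partitions m.+1.
  apply/setP => P; apply/setDP/imsetP => [[Pm] | [QC QCm ->]].
    rewrite inE => x1P; move: (Pm); rewrite inE => /andP[pP /eqP cP].
    by exists (extract_from_block P); rewrite ?extract_from_block_pointed ?extract_from_blockK.
  by split; [exact: insert_in_block_partitions | rewrite inE (set1_notin_insert_in_block QCm)].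
rewrite !card_in_imset //; first exact: can_in_inj (@insert_in_blockK _).
move=> Q1 Q2; rewrite !inE => /andP[pQ1 _] /andP[pQ2 _] /(congr1 (fun P => P :\ [set x])).
by rewrite !setU1K // set1_notin_partition.
Qed.

End AddPoint.

Lemma card_set_partitions (T : finType) n (D : {set T}) m :
  #|D| = n -> #|set_partitions D m| = stirling2_rec n m.
Proof.
elim: n D m => [|n IHn] D m.
  move/eqP; rewrite cards_eq0 => /eqP ->.
  have -> : set_partitions set0 m = if m is 0 then [set set0 : {set {set T}}] else set0.
    apply/setP => P; rewrite !inE partition_set0.
    by case: m => [|m]; rewrite ?inE; case: eqP => [->|] //=; rewrite cards0.
  by case: m; rewrite ?cards1 ?cards0.
move=> cD; have /set0Pn[x xD] : D != set0 by rewrite -card_gt0 cD.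
have cDx : #|D :\ x| = n by apply/eq_add_S; rewrite -cD (cardsD1 x D) xD.
rewrite -(setD1K xD); case: m => [|m]; last by rewrite card_set_partitionsU1 ?setD11 // !IHn.
apply/eqP; rewrite cards_eq0; apply/eqP/setP => P; rewrite !inE cards_eq0.
apply/negP => /andP[/andP[/eqP covP _] /eqP P0].
by move: covP; rewrite P0 /cover big_set0 => /setP/(_ x); rewrite !inE eqxx.
Qed.

Lemma stirling2E n m : stirling2 n m = stirling2_rec n m.
Proof.
by rewrite /stirling2 -/(set_partitions _ m) (card_set_partitions _ (cardsT _)) card_ord.
Qed.

End SetPartitions.

Local Open Scope ring_scope.

Section BinomialTransform.
Variables (R : comPzRingType) (c : R).

Definition binomial_transform (a : nat -> R) n :=
  \sum_(i < n.+1) 'C(n, i)%:R * c ^+ i * a (n - i)%N.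

Lemma binomial_transform0 a : binomial_transform a 0 = a 0%N.
Proof. by rewrite /binomial_transform big_ord1 bin0 expr0 !mul1r subn0. Qed.

Lemma binomial_transformS a n :
  binomial_transform a n.+1 = binomial_transform (a \o succn) n + c * binomial_transform a n.
Proof.
rewrite /binomial_transform big_ord_recl [in RHS]big_ord_recl mulr_sumr !bin0 !subn0.
under eq_bigr => i _ do rewrite lift0 subSS binS natrD !mulrDl.
rewrite big_split /= addrA; congr (_ + _); last by apply: eq_bigr => i _; rewrite exprS; ring.
rewrite big_ord_recr /= bin_small // mul0r mul0r addr0; congr (_ + _).
by apply: eq_bigr => i _; rewrite /bump leq0n add1n subnSK.
Qed.

Lemma binomial_transform_lin (a b : nat -> R) r n :
  binomial_transform (fun m => a m + r * b m) n =
  binomial_transform a n + r * binomial_transform b n.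
Proof.
rewrite /binomial_transform mulr_sumr -big_split /=.
by apply: eq_bigr => i _; ring.
Qed.

End BinomialTransform.

Definition stirling2_shift (k n j : nat) : int :=
  binomial_transform (- k%:Z) (fun m => (stirling2_rec m j)%:Z) n.

Lemma stirling2_shift0 k j : stirling2_shift k 0 j = (j == 0)%N%:Z.
Proof. by rewrite /stirling2_shift binomial_transform0; case: j. Qed.

Lemma stirling2_shiftS k n j :
  stirling2_shift k n.+1 j =
  (if j is j'.+1 then stirling2_shift k n j' else 0) + (j%:Z - k%:Z) * stirling2_shift k n j.
Proof.
have shiftE : (fun m => (stirling2_rec m j)%:Z) \o succn = fun m =>
    (if j is j'.+1 then (stirling2_rec m j')%:Z else 0) + j%:Z * (stirling2_rec m j)%:Z.
  by apply: funext => m; rewrite /comp stirling2_recS PoszD PoszM; case: j.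
rewrite /stirling2_shift binomial_transformS shiftE binomial_transform_lin mulrBl addrA.
case: j {shiftE} => [|j]; rewrite mulNr //.
by rewrite [X in X + _ - _]big1 // => i _; rewrite mulr0.
Qed.

Lemma stirling2_shift_small k n j : (n < j)%N -> stirling2_shift k n j = 0.
Proof.
move=> ltnj; apply: big1 => i _.
by rewrite stirling2_rec_small ?mulr0 // (leq_ltn_trans (leq_subr _ _)).
Qed.

Lemma norm_stirling2_shift_le k n j :
  (j <= 2 * k)%N -> `|stirling2_shift k n j| <= ('C(n, j) * k ^ n)%N%:Z.
Proof.
elim: n j => [|n IHn] j jk; first by rewrite stirling2_shift0 expn0 muln1; case: j {jk}.
have IHj : `|(j%:Z - k%:Z) * stirling2_shift k n j| <= k%:Z * ('C(n, j) * k ^ n)%N%:Z.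
  by rewrite normrM ler_pM ?IHn //; lia.
rewrite stirling2_shiftS expnS; case: j jk IHj => [|j] jk IHj.
  by rewrite add0r !bin0 in IHj *; lia.
rewrite binS (le_trans (ler_normD _ _)) //.
have kA : ('C(n, j) * k ^ n <= 'C(n, j) * (k * k ^ n))%N.
  by rewrite mulnCA leq_pmull //; lia.
have := IHn j (ltnW jk); move: IHj kA; lia.
Qed.

Lemma Csk_stirling2_shift s k : Csk s k = stirling2_shift k (2 * k + 2 * s) (2 * k).
Proof.
rewrite /Csk /stirling2_shift /binomial_transform.
rewrite [RHS](bigID (fun i : 'I__ => (i < (2 * s).+1)%N)) /=.
rewrite [X in _ = _ + X]big1 ?addr0 => [|i]; last first.
  rewrite -leqNgt => lo; have ltiN := ltn_ord i.
  by rewrite stirling2_rec_small ?mulr0 //; lia.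
have le : ((2 * s).+1 <= (2 * k + 2 * s).+1)%N by lia.
rewrite -(big_ord_widen _ (fun i => 'C(2 * k + 2 * s, i)%:R * (- k%:Z) ^+ i *
  (stirling2_rec (2 * k + 2 * s - i) (2 * k))%:Z) le).
by apply: eq_bigr => i _; rewrite SetPartitions.stirling2E [in RHS]exprNn !PoszM -!natz natrX; ring.
Qed.

Local Open Scope classical_set_scope.

Lemma binomial_term_le1 (R : realFieldType) (r : R) N j :
  0 <= r <= 1 -> 'C(N, j)%:R * (r ^+ (N - j) * (1 - r) ^+ j) <= 1.
Proof.
move=> /andP[r0 r1]; have [ltNj | lejN] := ltnP N j; first by rewrite bin_small // mul0r.
have sum1 : (r + (1 - r)) ^+ N = 1 by rewrite addrC subrK expr1n.
rewrite -[X in _ <= X]sum1 [X in _ <= X]exprDn.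
rewrite (bigD1 (Ordinal (leq_ltn_trans lejN (ltnSn N)))) //=.
rewrite mulr_natl lerDl.
by apply: sumr_ge0 => i _; rewrite mulrn_wge0 // mulr_ge0 // exprn_ge0 // subr_ge0.
Qed.

Lemma cvg_binomial_geometric0 (R : archiRealFieldType) j (q : R) :
  0 <= q < 1 -> 'C(N, j)%:R * q ^+ N @[N --> \oo] --> 0.
Proof.
move=> /andP[q0 q1]; pose r := (1 + q) / 2.
have r0 : 0 < r by rewrite /r; lra.
have r1 : r < 1 by rewrite /r; lra.
have qr : q < r by rewrite /r; lra.
have bound N : 'C(N, j)%:R * q ^+ N <= (r / (1 - r)) ^+ j * (q / r) ^+ N.
  have [ltNj | lejN] := ltnP N j.
    by rewrite bin_small // mul0r mulr_ge0 // exprn_ge0 // divr_ge0 //; lra.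
  have rq : r ^+ N * (q / r) ^+ N = q ^+ N.
    by rewrite -exprMn mulrCA divff ?gt_eqF // mulr1.
  have rr : (1 - r) ^+ j * (r / (1 - r)) ^+ j = r ^+ j.
    by rewrite -exprMn mulrCA divff ?mulr1 // subr_eq0 gt_eqF.
  have rN : r ^+ N = r ^+ (N - j) * r ^+ j by rewrite -exprD subnK.
  have -> : 'C(N, j)%:R * q ^+ N =
      'C(N, j)%:R * (r ^+ (N - j) * (1 - r) ^+ j) * ((r / (1 - r)) ^+ j * (q / r) ^+ N).
    by rewrite -rq rN -rr; ring.
  by rewrite ler_piMl ?binomial_term_le1 ?mulr_ge0 ?exprn_ge0 ?divr_ge0 //; lra.
apply: (@squeeze_cvgr _ _ _ _ (cst 0) (fun N => (r / (1 - r)) ^+ j * (q / r) ^+ N)).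
- by apply: nearW => N; rewrite bound andbT; apply: mulr_ge0; rewrite ?exprn_ge0.
- exact: cvg_cst.
- rewrite -[X in _ --> X](mulr0 ((r / (1 - r)) ^+ j)); apply: cvgMl_tmp; apply: cvg_expr.
  by rewrite ger0_norm ?ltr_pdivrMr ?mul1r // divr_ge0 // ltW.
Qed.

Lemma series_linear_rec (R : comPzRingType) (a b : nat -> R) (c t : R) N :
  (forall n, a n.+1 = b n + c * a n) ->
  (1 - c * t) * series (fun n => a n * t ^+ n) N =
  a 0%N + t * series (fun n => b n * t ^+ n) N - a N * t ^+ N.
Proof.
move=> rec; have stepN := seriesSr (fun n => a n * t ^+ n) N.
have step0 : series (fun n => a n * t ^+ n) N.+1 =
    a 0%N + t * (series (fun n => b n * t ^+ n) N + c * series (fun n => a n * t ^+ n) N).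
  rewrite !seriesEord /= big_ord_recl expr0 mulr1 mulr_sumr -big_split mulr_sumr.
  by congr (_ + _); apply: eq_bigr => i _; rewrite lift0 rec exprS /=; ring.
rewrite -[a 0%N](addrK (t * (series (fun n => b n * t ^+ n) N +
  c * series (fun n => a n * t ^+ n) N))) -step0 stepN.
ring.
Qed.

Definition stirling2_shift_gf (R : fieldType) (k j : nat) (t : R) : R :=
  t ^+ j / \prod_(i < j.+1) (1 - (i%:R - k%:R) * t).

Lemma stirling2_shift_gfS (R : fieldType) k j (t : R) :
  stirling2_shift_gf k j.+1 t = (1 - (j.+1%:R - k%:R) * t)^-1 * (t * stirling2_shift_gf k j t).
Proof. by rewrite /stirling2_shift_gf big_ord_recr /= invfM exprS; ring. Qed.

Section StirlingShiftSeries.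
Variables (R : archiRealFieldType) (k : nat) (t : R).
Hypothesis ht : `|t| < k%:R^-1.

Let k_gt0 : 0 < k%:R :> R.
Proof. by rewrite -invr_gt0 (le_lt_trans _ ht). Qed.

Lemma centered_factor_neq0 j : (j <= 2 * k)%N -> 1 - (j%:R - k%:R) * t != 0.
Proof.
move=> jk; have cj : `|j%:R - k%:R| <= k%:R :> R.
  by rewrite ler_norml; move: jk (ler0n R j); rewrite -(ler_nat R) natrM; lra.
have : `|(j%:R - k%:R) * t| < 1.
  rewrite normrM (le_lt_trans (ler_wpM2r _ cj)) //.
  by rewrite -ltr_pdivlMl // mulr1.
by apply: contraTneq => /eqP; rewrite subr_eq0 => /eqP <-; rewrite normr1 ltxx.
Qed.

Lemma cvg_stirling2_shift_term0 j : (j <= 2 * k)%N ->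
  (stirling2_shift k N j)%:~R * t ^+ N @[N --> \oo] --> (0 : R).
Proof.
move=> jk; apply/norm_cvg0P.
apply: (@squeeze_cvgr _ _ _ _ (cst 0) (fun N => 'C(N, j)%:R * (k%:R * `|t|) ^+ N)).
- apply: nearW => N; rewrite normr_ge0 /= normrM normrX -intr_norm exprMn mulrA.
  rewrite ler_wpM2r ?exprn_ge0 //.
  have := norm_stirling2_shift_le N jk.
  by rewrite -(ler_int R) PoszM rmorphM /= -!pmulrn natrX.
- exact: cvg_cst.
- apply: cvg_binomial_geometric0; rewrite mulr_ge0 //=.
  by rewrite -ltr_pdivlMl // mulr1.
Qed.

Lemma cvg_stirling2_shift_series_step j L : (j <= 2 * k)%N ->
  [series (if j is j'.+1 then stirling2_shift k n j' else 0)%:~R * t ^+ n]_n @ \oo --> L ->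
  [series (stirling2_shift k n j)%:~R * t ^+ n]_n @ \oo -->
    (1 - (j%:R - k%:R) * t)^-1 * ((j == 0)%:R + t * L).
Proof.
move=> jk cvgL; have cne0 := centered_factor_neq0 jk.
have rec n : (stirling2_shift k n.+1 j)%:~R =
    (if j is j'.+1 then stirling2_shift k n j' else 0)%:~R +
    (j%:R - k%:R) * (stirling2_shift k n j)%:~R :> R.
  by rewrite stirling2_shiftS rmorphD rmorphM rmorphB.
have -> : [series (stirling2_shift k n j)%:~R * t ^+ n]_n = fun N =>
    (1 - (j%:R - k%:R) * t)^-1 * ((j == 0)%:R +
      t * [series (if j is j'.+1 then stirling2_shift k n j' else 0)%:~R * t ^+ n]_n N -
      (stirling2_shift k N j)%:~R * t ^+ N).
  apply/funext => N; rewrite -[LHS](mulKf cne0) (series_linear_rec t N rec) /=.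
  by rewrite stirling2_shift0.
apply: cvgMl_tmp; rewrite -[X in _ --> X]subr0.
apply: cvgB; last exact: cvg_stirling2_shift_term0.
by apply: cvgD; [exact: cvg_cst | exact: cvgMl_tmp].
Qed.

Lemma cvg_stirling2_shift_series j : (j <= 2 * k)%N ->
  [series (stirling2_shift k n j)%:~R * t ^+ n]_n @ \oo --> stirling2_shift_gf k j t.
Proof.
elim: j => [|j IHj] jk.
  have cvg0 : [series (0 : int)%:~R * t ^+ n]_n @ \oo --> (0 : R).
    by apply: cvg_near_cst; apply: nearW => N; rewrite /series /= big1 // => n _; rewrite mul0r.
  have := cvg_stirling2_shift_series_step jk cvg0.
  by rewrite mulr0 addr0 mulr1 /stirling2_shift_gf big_ord1 expr0 div1r.
have := cvg_stirling2_shift_series_step jk (IHj (ltnW jk)).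
by rewrite stirling2_shift_gfS add0r.
Qed.

End StirlingShiftSeries.

Lemma prod_centered_factors (R : comPzRingType) k (t : R) :
  \prod_(i < (2 * k).+1) (1 - (i%:R - k%:R) * t) =
  \prod_(1 <= l < k.+1) (1 - l%:R ^+ 2 * t ^+ 2).
Proof.
elim: k => [|k IHk]; first by rewrite big_ord1 big_geq //= subrr mul0r subr0.
rewrite (_ : (2 * k.+1).+1 = (2 * k).+3) 1?mulnS // big_ord_recl big_ord_recr /=.
rewrite (eq_bigr (fun i : 'I_(2 * k).+1 => 1 - (i%:R - k%:R) * t)); last first.
  by move=> i _; rewrite /bump /= add1n !mulrS; congr (1 - _ * t); ring.
rewrite IHk [RHS]big_nat_recr //= /bump /= add1n -[(2 * k).+2]addn2 natrD natrM !mulrS; ring.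
Qed.

Lemma stirling2_shift_gf_double (R : fieldType) k (t : R) :
  stirling2_shift_gf k (2 * k) t = \prod_(1 <= j < k.+1) (t ^+ 2 / (1 - j%:R ^+ 2 * t ^+ 2)).
Proof.
by rewrite /stirling2_shift_gf prod_centered_factors prodf_div prodr_const_nat subn1 exprM.
Qed.

Lemma series_even_part (R : comPzRingType) (a : nat -> R) (t : R) M :
  series (fun n => a n * t ^+ n) (2 * M)%N + series (fun n => a n * (- t) ^+ n) (2 * M)%N =
  2 * series (fun s => a (2 * s)%N * t ^+ (2 * s)) M.
Proof.
elim: M => [|M IHM]; first by rewrite /series /= !big_geq // mulr0 addr0.
rewrite mulnS !seriesSr mulrDr -IHM !exprS !exprM sqrrN; ring.
Qed.

Lemma series_Csk_even_part (R : comPzRingType) k (t : R) N :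
  2 * [series (Csk s k)%:~R * t ^+ (2 * s + 2 * k)]_s N =
  [series (stirling2_shift k n (2 * k))%:~R * t ^+ n]_n (2 * (N + k))%N +
  [series (stirling2_shift k n (2 * k))%:~R * (- t) ^+ n]_n (2 * (N + k))%N.
Proof.
rewrite series_even_part series_addn; congr (2 * _).
have -> : [series (stirling2_shift k (2 * s) (2 * k))%:~R * t ^+ (2 * s)]_s k = 0.
  rewrite /series /= big_nat_cond big1 // => s /andP[/andP[_ ltsk] _].
  by rewrite stirling2_shift_small ?mul0r //; lia.
rewrite add0r /series /= -[X in _ = \sum_(X <= _ < _) _]add0n big_addn addnK.
apply: eq_bigr => s _.
by rewrite Csk_stirling2_shift (addnC (2 * k)) mulnDr.
Qed.

Theorem mainTheorem5 (R : realType) (k : nat) (t : R) :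
  (0 < k)%N -> `|t| < k%:R^-1 ->
  [series (Csk s k)%:~R * t ^+ (2 * s + 2 * k)]_s @ \oo -->
    (\prod_(1 <= j < k.+1) (t ^+ 2 / (1 - j%:R ^+ 2 * t ^+ 2)) : R).
Proof.
(* [0 < k] is implied by [`|t| < k%:R^-1], as [0^-1 = 0]. *)
move=> _ ht; set G := \prod_(1 <= j < k.+1) _.
have htN : `|- t| < k%:R^-1 by rewrite normrN.
have := cvg_stirling2_shift_series ht (leqnn (2 * k)).
have := cvg_stirling2_shift_series htN (leqnn (2 * k)).
rewrite !stirling2_shift_gf_double sqrrN -/G => cvg_Nt cvg_t.
have cvg_double : (fun N => 2 * (N + k))%N @ \oo --> \oo.
  apply: (@cvg_comp _ _ _ (fun N => N + k)%N (fun N => 2 * N)%N).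
    exact: cvg_addnr.
  exact: cvg_mulnl.
have two_neq0 : 2 != 0 :> R by rewrite pnatr_eq0.
have -> : G = 2^-1 * (G + G) by rewrite -mulr2n -[G *+ 2]mulr_natl mulKf.
rewrite (eq_cvg _ (g := fun N => 2^-1 *
    ([series (stirling2_shift k n (2 * k))%:~R * t ^+ n]_n (2 * (N + k))%N +
     [series (stirling2_shift k n (2 * k))%:~R * (- t) ^+ n]_n (2 * (N + k))%N))); last first.
  by move=> N; rewrite -series_Csk_even_part mulKf.
apply: cvgMl_tmp; exact: (cvg_comp _ _ cvg_double (cvgD cvg_t cvg_Nt)).
Qed.
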